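(* Let $A_1,\dots,A_n:\mathbb{R}^d\rightrightarrows\mathbb{R}^d$ be maximal monotone and $B:\mathbb{R}^d\to\mathbb{R}^d$ monotone and Lipschitz continuous. Let $(z^k)\subset\mathbb{R}^d$, $(w_1^k,\dots,w_{n+1}^k)\subset\mathbb{R}^{(n+1)d}$ and $(x_i^k,y_i^k)_{i=1}^{n+1}\subset\mathbb{R}^{2(n+1)d}$ be deterministic sequences such that $y_i^k\in A_i(x_i^k)$ for $i=1,\dots,n$, $\sum_{i=1}^{n+1}w_i^k=0$ for all $k$, $$\xi_1\sum_{i=1}^n\|y_i^k-w_i^k\|^2+\xi_2\sum_{i=1}^n\|z^k-x_i^k\|^2+\xi_3\|B(z^k)-w_{n+1}^k\|^2\to0$$ for some scalars $\xi_1,\xi_2,\xi_3>0$, and $p^k:=(z^k,w_1^k,\dots,w_{n+1}^k)\to\hat p:=(\hat z,\hat w_1,\dots,\hat w_{n+1})$. Then $\hat p\in\mathcal{S}$.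
   Context: $\mathcal{S}=\{(z,w_1,\dots,w_{n+1})\in\mathbb{R}^{(n+2)d}: w_i\in A_i(z)\ \forall i=1,\dots,n,\ w_{n+1}=B(z),\ \sum_{i=1}^{n+1}w_i=0\}$. *)

From HB Require Import structures.
From mathcomp Require Import all_boot all_order all_algebra.
From mathcomp Require Import all_classical all_reals all_analysis.
Set Implicit Arguments. Unset Strict Implicit. Unset Printing Implicit Defensive.
Import Order.TTheory GRing.Theory Num.Theory.
Import numFieldNormedType.Exports.
Local Open Scope classical_set_scope.
Local Open Scope ring_scope.

Definition dotp (R : realType) (d : nat) (u v : 'rV[R]_d) : R :=
  \sum_(j < d) u ord0 j * v ord0 j.
Definition enorm (R : realType) (d : nat) (u : 'rV[R]_d) : R :=
  Num.sqrt (dotp u u).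

Definition monotone_op (R : realType) (d : nat) (A : 'rV[R]_d -> set 'rV[R]_d) :=
  forall x y u v, A x u -> A y v -> 0 <= dotp (x - y) (u - v).

Definition maximal_monotone (R : realType) (d : nat) (A : 'rV[R]_d -> set 'rV[R]_d) :=
  monotone_op A /\
  forall A' : 'rV[R]_d -> set 'rV[R]_d, monotone_op A' ->
    (forall x u, A x u -> A' x u) -> forall x u, A' x u -> A x u.

Definition monotone_fun (R : realType) (d : nat) (B : 'rV[R]_d -> 'rV[R]_d) :=
  forall x y, 0 <= dotp (x - y) (B x - B y).

Definition lipschitz_fun (R : realType) (d : nat) (B : 'rV[R]_d -> 'rV[R]_d) :=
  exists L : R, forall x y, enorm (B x - B y) <= L * enorm (x - y).

(* The solution set S. Indices: w : 'I_n.+1 -> R^d, where w (widen i) for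
   i : 'I_n is w_{i+1} and w ord_max is w_{n+1}. *)
Definition solS (R : realType) (d n : nat) (A : 'I_n -> 'rV[R]_d -> set 'rV[R]_d)
  (B : 'rV[R]_d -> 'rV[R]_d) (z : 'rV[R]_d) (w : 'I_n.+1 -> 'rV[R]_d) : Prop :=
  (forall i : 'I_n, A i z (w (widen_ord (leqnSn n) i))) /\
  w ord_max = B z /\
  \sum_(i < n.+1) w i = 0.

(** Every summand of the residual is nonnegative, so each one tends to 0.
    Hence x_i^k -> zhat, y_i^k - w_i^k -> 0 (so y_i^k -> what_i) and
    B z^k - w_(n+1)^k -> 0, where B z^k -> B zhat because B is Lipschitz;
    the constraint sum_i w_i^k = 0 passes to the limit.  The inclusion
    what_i \in A_i zhat is the closedness of the graph of a maximal monotone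
    operator: the limit pair is monotonically related to every point of the
    graph, so adding it to the graph keeps the operator monotone, and
    maximality forces it to be in the graph already. *)

From HB Require Import structures.
From mathcomp Require Import all_boot all_order all_algebra.
From mathcomp Require Import all_classical all_reals all_analysis.
Import Order.TTheory GRing.Theory Num.Theory.
Import numFieldNormedType.Exports.
Local Open Scope classical_set_scope.
Local Open Scope ring_scope.

Set Implicit Arguments.
Unset Strict Implicit.
Unset Printing Implicit Defensive.

Section NonnegativeSequences.
Variable R : realType.
Implicit Types (u v : nat -> R) (c : R).

Lemma cvg0_ge0_le u v : (forall k, 0 <= u k <= v k) ->
  v @ \oo --> 0 -> u @ \oo --> 0.
Proof.
move=> uv v0; apply: (squeeze_cvgr _ (cvg_cst 0) v0).
by apply: nearW => k; exact: uv.
Qed.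

Lemma cvg0_ge0_add u v : (forall k, 0 <= u k) -> (forall k, 0 <= v k) ->
  (fun k => u k + v k) @ \oo --> 0 -> u @ \oo --> 0 /\ v @ \oo --> 0.
Proof.
move=> u0 v0 uv0; split; apply: cvg0_ge0_le uv0 => k.
- by rewrite u0 lerDl v0.
- by rewrite v0 lerDr u0.
Qed.

Lemma cvg0_pmull c u : 0 < c -> (fun k => c * u k) @ \oo --> 0 -> u @ \oo --> 0.
Proof.
move=> c0 cu0; rewrite (_ : u = fun k => c^-1 * (c * u k)).
  by rewrite -(mulr0 c^-1); apply: cvgM => //; exact: cvg_cst.
by apply/funext => k; rewrite mulKf ?gt_eqF.
Qed.

Lemma cvg0_ge0_pcombination3 (a b c : nat -> R) ca cb cc :
  0 < ca -> 0 < cb -> 0 < cc ->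
  (forall k, 0 <= a k) -> (forall k, 0 <= b k) -> (forall k, 0 <= c k) ->
  (fun k => ca * a k + cb * b k + cc * c k) @ \oo --> 0 ->
  [/\ a @ \oo --> 0, b @ \oo --> 0 & c @ \oo --> 0].
Proof.
move=> ca0 cb0 cc0 a0 b0 c0 res0.
have ca_a0 k := mulr_ge0 (ltW ca0) (a0 k).
have cb_b0 k := mulr_ge0 (ltW cb0) (b0 k).
have cc_c0 k := mulr_ge0 (ltW cc0) (c0 k).
have [ab0 /cvg0_pmull c_0] :=
  cvg0_ge0_add (fun k => addr_ge0 (ca_a0 k) (cb_b0 k)) cc_c0 res0.
have [/cvg0_pmull a_0 /cvg0_pmull b_0] := cvg0_ge0_add ca_a0 cb_b0 ab0.
by split; [exact: a_0 | exact: b_0 | exact: c_0].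
Qed.

Lemma cvg0_ge0_sum m (f : 'I_m -> nat -> R) : (forall i k, 0 <= f i k) ->
  (fun k => \sum_(i < m) f i k) @ \oo --> 0 -> forall i, f i @ \oo --> 0.
Proof.
move=> f0 sum0 i; apply: cvg0_ge0_le sum0 => k.
by rewrite f0 (bigD1 i) //= lerDl sumr_ge0.
Qed.

End NonnegativeSequences.

Section EuclideanRow.
Variables (R : realType) (d : nat).
Implicit Types (u v : 'rV[R]_d).

Lemma dotp_ge0 u : 0 <= dotp u u.
Proof. by apply: sumr_ge0 => j _; rewrite -expr2 sqr_ge0. Qed.

Lemma dotp0 : dotp (0 : 'rV[R]_d) 0 = 0.
Proof. by apply: big1 => j _; rewrite mxE mul0r. Qed.

Lemma dotpNN u v : dotp (- u) (- v) = dotp u v.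
Proof. by apply: eq_bigr => j _; rewrite !mxE mulrNN. Qed.

Lemma enorm_ge0 u : 0 <= enorm u.
Proof. exact: sqrtr_ge0. Qed.

Lemma enorm_sqr u : enorm u ^+ 2 = dotp u u.
Proof. by rewrite sqr_sqrtr // dotp_ge0. Qed.

Lemma ler_norm_entry u j : `|u ord0 j| <= `|u|.
Proof.
rewrite [`|u|]mx_normrE.
exact: (le_bigmax _ (fun ij : 'I_1 * 'I_d => `|u ij.1 ij.2|) (ord0, j)).
Qed.

Lemma ler_norm_enorm u : `|u| <= enorm u.
Proof.
rewrite [`|u|]mx_normrE; apply: bigmax_le => [|[i j] _ /=]; first exact: enorm_ge0.
rewrite (ord1 i) -sqrtr_sqr ler_sqrt ?dotp_ge0 // /dotp (bigD1 j) //= -expr2.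
by rewrite lerDl sumr_ge0 // => k _; rewrite -expr2 sqr_ge0.
Qed.

Lemma cvg_entry (u : nat -> 'rV[R]_d) (a : 'rV[R]_d) j :
  u @ \oo --> a -> (fun k => u k ord0 j) @ \oo --> a ord0 j.
Proof.
move=> /cvgrPdist_lt ua; apply/cvgrPdist_lt => e e0.
apply: filterS (ua e e0) => k; apply: le_lt_trans.
by have := ler_norm_entry (a - u k) j; rewrite !mxE.
Qed.

Lemma cvg_dotp (u v : nat -> 'rV[R]_d) (a b : 'rV[R]_d) :
  u @ \oo --> a -> v @ \oo --> b ->
  (fun k => dotp (u k) (v k)) @ \oo --> dotp a b.
Proof.
move=> ua vb; apply: (@cvg_big R^o _ +%R 0 xpredT add_continuous) => // j _.
by apply: cvgM; exact: cvg_entry.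
Qed.

Lemma cvg0_enorm_sqrP (u : nat -> 'rV[R]_d) :
  u @ \oo --> (0 : 'rV[R]_d) <-> (fun k => enorm (u k) ^+ 2) @ \oo --> 0.
Proof.
split=> [u0 | /cvgrPdist_lt nu0].
  by under eq_fun do rewrite enorm_sqr; rewrite -dotp0; exact: cvg_dotp.
apply/cvgrPdist_lt => e e0; apply: filterS (nu0 _ (exprn_gt0 2 e0)) => k.
rewrite !sub0r !normrN ger0_norm ?sqr_ge0 // => ltne.
apply: le_lt_trans (ler_norm_enorm _) _.
by rewrite -(@ltr_pXn2r _ 2) ?nnegrE ?enorm_ge0 ?ltW.
Qed.

Lemma cvg_sub0r (V : pseudoMetricNormedZmodType R) (f g : nat -> V) (a : V) :
  (fun k => g k - f k) @ \oo --> 0 -> g @ \oo --> a -> f @ \oo --> a.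
Proof.
move=> gf0; apply: cvg_sub0; rewrite -oppr0 (_ : f - g = fun k => - (g k - f k)).
  exact: cvgN.
by apply/funext => k; rewrite opprB.
Qed.

Lemma lipschitz_fun_cvg (B : 'rV[R]_d -> 'rV[R]_d) (z : nat -> 'rV[R]_d) a :
  lipschitz_fun B -> z @ \oo --> a -> (fun k => B (z k)) @ \oo --> B a.
Proof.
move=> [L BL] /subr_cvg0/cvg0_enorm_sqrP za0; apply/subr_cvg0/cvg0_enorm_sqrP.
apply: (@cvg0_ge0_le _ _ (fun k => L ^+ 2 * enorm (z k - a) ^+ 2)) => [k|].
  rewrite sqr_ge0 -exprMn ler_pXn2r ?nnegrE ?enorm_ge0 ?BL //.
  exact: le_trans (enorm_ge0 _) (BL _ _).
by rewrite -(mulr0 (L ^+ 2)); apply: cvgM => //; exact: cvg_cst.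
Qed.

End EuclideanRow.

Section MaximalMonotone.
Variables (R : realType) (d : nat) (A : 'rV[R]_d -> set 'rV[R]_d).
Implicit Types a b : 'rV[R]_d.

Lemma maximal_monotone_related a b : maximal_monotone A ->
  (forall x u, A x u -> 0 <= dotp (x - a) (u - b)) -> A a b.
Proof.
move=> [monoA maxA] related.
apply: (maxA (fun x u => A x u \/ (x = a /\ u = b))); last by right.
- move=> x x' u u' [Axu|[-> ->]] [Axu'|[-> ->]].
  + exact: monoA.
  + exact: related.
  + by rewrite -dotpNN !opprB; exact: related.
  + by rewrite !subrr dotp0.
- by move=> x u; left.
Qed.

Lemma monotone_op_cvg_related (x y : nat -> 'rV[R]_d) a b :
  monotone_op A -> (forall k, A (x k) (y k)) ->
  x @ \oo --> a -> y @ \oo --> b ->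
  forall x' u, A x' u -> 0 <= dotp (x' - a) (u - b).
Proof.
move=> monoA Axy xa yb x' u Ax'u.
apply: (@cvgr_to_ge _ \oo _ _ (fun k => dotp (x' - x k) (u - y k))).
  by apply: cvg_dotp; apply: cvgB => //; exact: cvg_cst.
by apply: nearW => k; exact: monoA.
Qed.

Lemma maximal_monotone_cvg (x y : nat -> 'rV[R]_d) a b :
  maximal_monotone A -> (forall k, A (x k) (y k)) ->
  x @ \oo --> a -> y @ \oo --> b -> A a b.
Proof.
move=> maxA Axy xa yb; apply: maximal_monotone_related => //.
exact: monotone_op_cvg_related maxA.1 Axy xa yb.
Qed.

End MaximalMonotone.

Theorem lemma4 (R : realType) (d n : nat)
  (A : 'I_n -> 'rV[R]_d -> set 'rV[R]_d) (B : 'rV[R]_d -> 'rV[R]_d)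
  (hA : forall i, maximal_monotone (A i))
  (hBm : monotone_fun B) (hBl : lipschitz_fun B)
  (z : nat -> 'rV[R]_d) (w x y : nat -> 'I_n.+1 -> 'rV[R]_d)
  (xi1 xi2 xi3 : R) (zhat : 'rV[R]_d) (what : 'I_n.+1 -> 'rV[R]_d) :
  0 < xi1 -> 0 < xi2 -> 0 < xi3 ->
  (forall k (i : 'I_n),
     A i (x k (widen_ord (leqnSn n) i)) (y k (widen_ord (leqnSn n) i))) ->
  (forall k, \sum_(i < n.+1) w k i = 0) ->
  (fun k => xi1 * (\sum_(i < n) enorm (y k (widen_ord (leqnSn n) i)
                                       - w k (widen_ord (leqnSn n) i)) ^+ 2)
          + xi2 * (\sum_(i < n) enorm (z k - x k (widen_ord (leqnSn n) i)) ^+ 2)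
          + xi3 * enorm (B (z k) - w k ord_max) ^+ 2) @ \oo --> (0 : R) ->
  z @ \oo --> zhat ->
  (forall i, (fun k => w k i) @ \oo --> what i) ->
  solS A B zhat what.
Proof.
move=> xi1_gt0 xi2_gt0 xi3_gt0 Axy sum_w0 res0 z_zhat w_what.
have sum_sqr_ge0 (f : 'I_n -> 'rV[R]_d) : 0 <= \sum_(i < n) enorm (f i) ^+ 2.
  by apply: sumr_ge0 => i _; exact: sqr_ge0.
have [yw0 zx0 Bzw0] := cvg0_ge0_pcombination3 xi1_gt0 xi2_gt0 xi3_gt0
  (fun k => sum_sqr_ge0 _) (fun k => sum_sqr_ge0 _) (fun k => sqr_ge0 _) res0.
have {}yw0 i := (cvg0_enorm_sqrP _).2 (cvg0_ge0_sum (fun i k => sqr_ge0 _) yw0 i).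
have {}zx0 i := (cvg0_enorm_sqrP _).2 (cvg0_ge0_sum (fun i k => sqr_ge0 _) zx0 i).
have {}Bzw0 := (cvg0_enorm_sqrP _).2 Bzw0.
split; [|split].
- move=> i; apply: maximal_monotone_cvg (hA i) (Axy ^~ i) _ _.
    exact: cvg_sub0r (zx0 i) z_zhat.
  exact: cvg_sub0 (yw0 i) (w_what _).
- apply: (norm_cvg_unique (w_what ord_max)).
  exact: cvg_sub0r Bzw0 (lipschitz_fun_cvg hBl z_zhat).
- apply: (norm_cvg_unique
    (@cvg_big _ _ +%R 0 xpredT add_continuous _ _ _ _ _ _ (fun i _ => w_what i))).
  by rewrite /= (funext sum_w0); exact: cvg_cst.
Qed.
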